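(* Let $\Gamma$ be a finite group, $S\subseteq\Gamma$, $g\ge 3$, and $\Sigma$ an $|S|$-list of elements of $\Gamma$. If there exists an $RSM_\Gamma(S,g;\Sigma)$, then $\mathrm{GOP}(C_g[\Gamma,S];\, g\,\omega(\Sigma))$ has a solution, where $g\,\omega(\Sigma)=[g\,\omega(\sigma)\mid \sigma\in\Sigma]$.
   Context: A list is a multiset. For a list $\Sigma=[\sigma_1,\dots,\sigma_v]$ of elements of a group, $\omega(\Sigma)=[\omega(\sigma_1),\ldots,\omega(\sigma_v)]$ where $\omega(\sigma)$ is the order of $\sigma$. Let $\Gamma$ be a group (written additively, not necessarily abelian), $S\subseteq\Gamma$ and $\Sigma$ an $|S|$-list of elements of $\Gamma$. A row-sum matrix $RSM_\Gamma(S,g;\Sigma)$ is an $|S|\times g$ matrix ($g\ge2$) with entries in $\Gamma$ such that each column is a permutation (arrangement) of $S$ and the multiset of left-to-right row sums $r_1+r_2+\cdots+r_g$ equals $\Sigma$. For $g\ge3$, $C_g[\Gamma,S]$ is the graph with vertex set $\mathbb{Z}_g\times\Gamma$ and edges $\{(i,x),(i+1,d+x)\}$ for $i\in\mathbb{Z}_g$, $x\in\Gamma$, $d\in S$. For a regular graph $G$ and a list $[a_1,\ldots,a_r]$ of integers $\ge 3$, a solution to $\mathrm{GOP}(G;[a_1,\dots,a_r])$ is a partition of the edge set of $G$ into $2$-factors $F_1,\ldots,F_r$, where $F_i$ is a spanning subgraph all of whose components are cycles of length $a_i$. *)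

(* The group Gamma (additive in the paper) is a finGroupType,
   written multiplicatively: d + x becomes d * x, r_1 + ... + r_g becomes
   r_1 * ... * r_g (left to right). *)
From mathcomp Require Import all_boot all_order all_fingroup.
Set Implicit Arguments. Unset Strict Implicit. Unset Printing Implicit Defensive.
Local Open Scope group_scope.

Section Defs.
Variable gT : finGroupType.

Definition is_RSM (S : {set gT}) (g : nat) (Sigma : seq gT)
    (M : 'I_#|S| -> 'I_g -> gT) : Prop :=
  (forall j : 'I_g, perm_eq [seq M i j | i <- enum 'I_#|S|] (enum S)) /\
  perm_eq [seq (\prod_(j < g) M i j)%g | i <- enum 'I_#|S|] Sigma.

Arguments is_RSM : clear implicits.

Definition has_RSM (S : {set gT}) (g : nat) (Sigma : seq gT) : Prop :=
  exists M : 'I_#|S| -> 'I_g -> gT, @is_RSM S g Sigma M.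

Definition Cg_vertex (g : nat) := ('I_g * gT)%type.

Definition Cg_adj (g : nat) (S : {set gT}) (u v : Cg_vertex g) : bool :=
  ((nat_of_ord v.1 == (u.1.+1 %% g)%N) && (v.2 * u.2^-1 \in S)) ||
  ((nat_of_ord u.1 == (v.1.+1 %% g)%N) && (u.2 * v.2^-1 \in S)).

Definition Cg_edges (g : nat) (S : {set gT}) : {set {set Cg_vertex g}} :=
  [set e : {set Cg_vertex g} |
     [exists u : Cg_vertex g, exists v : Cg_vertex g, Cg_adj S u v && (e == [set u; v])]].

End Defs.

Section Factors.
Variable V : finType.

Definition cycle_edges (c : seq V) : {set {set V}} :=
  [set [set p.1; p.2] | p in zip c (rot 1 c)].

Definition is_a_factor (E : {set {set V}}) (a : nat) (F : {set {set V}}) : Prop :=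
  F \subset E /\
  exists cs : seq (seq V),
    [/\ all (fun c => uniq c && (size c == a)) cs,
        uniq (flatten cs),
        (forall v : V, v \in flatten cs) &
        F = \bigcup_(c <- cs) cycle_edges c].

Definition GOP_solution (E : {set {set V}}) (a : seq nat) : Prop :=
  exists F : 'I_(size a) -> {set {set V}},
    [/\ forall k : 'I_(size a), is_a_factor E (nth 0%N a k) (F k),
        (forall k l : 'I_(size a), k != l -> [disjoint F k & F l]) &
        \bigcup_(k < size a) F k = E].

End Factors.

From mathcomp Require Import all_boot all_order all_fingroup cyclic zify.
Set Implicit Arguments. Unset Strict Implicit. Unset Printing Implicit Defensive.
Local Open Scope group_scope.

(* A row N_0, ..., N_(g-1) of the row-sum matrix, read right to left, defines the
   permutation pi : (r, y) |-> (r + 1, N_r y) of Z_g x Gamma, whose edges {v, pi v} lie in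
   C_g[Gamma, S]. Starting from level 0, g steps multiply by the row sum sigma, so
   every cycle of pi has length g * o(sigma) and these edges form a 2-factor of
   the required type. As each column is an arrangement of S, two rows never use the
   same element at the same level: their factors are disjoint (for g >= 3 an edge
   cannot be traversed forwards by one row and backwards by another), and the edge
   {(r, y), (r + 1, d y)} belongs to the row carrying d in the column used at level r. *)

(* Brings back [order] and [orbit] of a function, shadowed by their group versions. *)
Import fingraph.

Section FunctionalGraph.
Variables (T : finType) (f : T -> T).

Definition fedges : {set {set T}} := [set [set v; f v] | v : T].

Lemma zip_traject x k :
  zip (traject f x k) (traject f (f x) k) = [seq (v, f v) | v <- traject f x k].
Proof. by elim: k x => //= k IH x; rewrite IH. Qed.

Lemma cycle_edges_traject x k : iter k f x = x ->
  cycle_edges (traject f x k) = [set [set v; f v] | v in traject f x k].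
Proof.
case: k => [_ | k xK]; first by apply/setP=> e; apply/imsetP/imsetP=> -[].
rewrite /cycle_edges trajectS [rot 1 _]rot1_cons.
have -> : rcons (traject f (f x) k) x = traject f (f x) k.+1 by rewrite trajectSr -iterSr xK.
rewrite -trajectS zip_traject.
apply/setP=> e; apply/imsetP/imsetP=> -[v].
  by case/mapP=> u uk -> ->; exists u.
by move=> vk ->; exists (v, f v) => //; apply: map_f.
Qed.

Hypothesis injf : injective f.

Lemma order_iter k x : order f (iter k f x) = order f x.
Proof. by elim: k => //= k <-; apply: order_id_cycle; apply: cycle_orbit. Qed.

Lemma order_eq_period x K : (forall m, (iter m f x == x) = (K %| m)%N) -> order f x = K.
Proof.
move=> period; have /dvdnP[q oK]: (K %| order f x)%N by rewrite -period iter_order.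
have o_gt0 := order_gt0 f x.
have K_gt0 : (0 < K)%N by move: o_gt0; rewrite oK muln_gt0 => /andP[].
apply/eqP; rewrite eqn_leq (dvdn_leq o_gt0) ?andbT ?oK ?dvdn_mull // -oK.
rewrite leqNgt; apply/negP => Kord.
have xK : iter K f x = x by apply/eqP; rewrite period.
have := findex_iter Kord; rewrite xK /findex /orbit -orderSpred /= eqxx => K0.
by rewrite -K0 in K_gt0.
Qed.

Lemma froot_orbit x y : y \in orbit f x -> froot f y = froot f x.
Proof.
by rewrite -fconnect_orbit fconnect_sym // => /(rootP (fconnect_sym injf)).
Qed.

Definition forbits : seq (seq T) := [seq orbit f x | x <- enum (froots f)].

Lemma mem_forbits v : v \in flatten forbits.
Proof.
apply/flattenP; exists (orbit f (froot f v)); last first.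
  by rewrite -fconnect_orbit fconnect_sym // connect_root.
by apply: map_f; rewrite mem_enum; apply: roots_root; apply: fconnect_sym.
Qed.

Lemma uniq_forbits : uniq (flatten forbits).
Proof.
rewrite /forbits.
have : all (froots f) (enum (froots f)) by apply/allP=> x; rewrite mem_enum.
elim: (enum (froots f)) (enum_uniq (froots f)) => //= x s IH /andP[xs us] /andP[rx rs].
rewrite cat_uniq orbit_uniq IH // andbT; apply/hasPn => y /flattenP[_ /mapP[z zs ->] yz].
apply/negP => yx; have /eqP rz := allP rs z zs.
have zx : z = x by rewrite -rz -(froot_orbit yz) (froot_orbit yx) (eqP rx).
by rewrite -zx zs in xs.
Qed.

Lemma fedges_forbits : \bigcup_(c <- forbits) cycle_edges c = fedges.
Proof.
rewrite big_map bigcup_seq; apply/setP=> e; apply/bigcupP/imsetP.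
  case=> x _; rewrite cycle_edges_traject ?iter_order // => /imsetP[v _ ->].
  by exists v.
case=> v _ ->.
case/flattenP: (mem_forbits v) => _ /mapP[x xr ->] vx.
exists x => //.
by rewrite cycle_edges_traject ?iter_order //; apply/imsetP; exists v.
Qed.

Lemma fedges_factor (E : {set {set T}}) a :
  fedges \subset E -> (forall x, order f x = a) -> is_a_factor E a fedges.
Proof.
move=> sFE oa; split=> //; exists forbits; split.
- by apply/allP=> _ /mapP[x _ ->]; rewrite orbit_uniq size_orbit oa eqxx.
- exact: uniq_forbits.
- exact: mem_forbits.
- by rewrite fedges_forbits.
Qed.

End FunctionalGraph.

Lemma val_iter_ordS m (i : 'I_m) k : (iter k (@ordS m) i : nat) = ((i + k) %% m)%N.
Proof.
elim: k => [|k IH] /=; first by rewrite addn0 modn_small.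
by rewrite IH -addn1 modnDml addn1 addnS.
Qed.

Lemma iter_ordS_neq m (i : 'I_m) k : (0 < k < m)%N -> iter k (@ordS m) i != i.
Proof.
case/andP=> k_gt0 k_lt_m; apply/eqP => /(congr1 (@nat_of_ord m)).
rewrite val_iter_ordS => e.
have := divn_eq (i + k) m; rewrite {}e; move: (_ %/ _)%N => q.
by case: q => [|q]; lia.
Qed.

Section RowPermutation.
Variables (gT : finGroupType) (n : nat) (N : 'I_n.+1 -> gT).

Definition row_step (v : 'I_n.+1 * gT) : 'I_n.+1 * gT := (ordS v.1, N v.1 * v.2).

Fixpoint walk_prod k : gT :=
  if k is k'.+1 then N (iter k' (@ordS n.+1) ord0) * walk_prod k' else 1.

Definition row_period : gT := walk_prod n.+1.

Lemma row_step_inj : injective row_step.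
Proof.
move=> [r y] [r' y'] /eqP; rewrite xpair_eqE /=.
by case/andP=> /eqP/ordS_inj <- /eqP/mulgI ->.
Qed.

Lemma iter_row_step k x :
  iter k row_step (ord0, x) = (iter k (@ordS n.+1) ord0, walk_prod k * x).
Proof. by elim: k => [|k IH]; rewrite ?mul1g // iterS IH /row_step /= mulgA. Qed.

Lemma iter_ordS_period : iter n.+1 (@ordS n.+1) (ord0 : 'I_n.+1) = ord0.
Proof. by apply: ord_inj; rewrite val_iter_ordS add0n modnn. Qed.

Lemma walk_prodD k : walk_prod (k + n.+1) = walk_prod k * row_period.
Proof.
have := congr1 snd (iterD k n.+1 row_step (ord0, 1)).
by rewrite !iter_row_step iter_ordS_period iter_row_step /= !mulg1.
Qed.

Lemma walk_prod_period q : walk_prod (q * n.+1) = row_period ^+ q.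
Proof. by elim: q => [|q IH] //; rewrite mulSnr walk_prodD IH expgSr. Qed.

Lemma iter_row_step_fix m x :
  (iter m row_step (ord0, x) == (ord0, x)) = (n.+1 * #[row_period] %| m)%N.
Proof.
rewrite iter_row_step xpair_eqE -{2}(mul1g x) (inj_eq (mulIg x)).
have -> : (iter m (@ordS n.+1) ord0 == ord0 :> 'I_n.+1) = (n.+1 %| m)%N.
  by rewrite -val_eqE /= val_iter_ordS add0n.
have [/dvdnP[q ->] | not_dvd] := boolP (n.+1 %| m)%N.
  by rewrite walk_prod_period -order_dvdn mulnC dvdn_pmul2r.
by apply/esym/negbTE; apply: contra not_dvd; apply: dvdn_trans; apply: dvdn_mulr.
Qed.

Lemma order_row_step v : order row_step v = (n.+1 * #[row_period])%N.
Proof.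
case: v => r y.
have -> : (r, y) = iter r row_step (ord0, (walk_prod r)^-1 * y).
  rewrite iter_row_step mulKVg; congr (_, _).
  by apply: ord_inj; rewrite val_iter_ordS add0n modn_small.
rewrite (order_iter row_step_inj); apply: (order_eq_period row_step_inj) => m.
exact: iter_row_step_fix.
Qed.

End RowPermutation.

Lemma walk_prod_rev (gT : finGroupType) n (M : 'I_n.+1 -> gT) k : (k <= n.+1)%N ->
  walk_prod (fun r => M (rev_ord r)) k = \prod_(n.+1 - k <= j < n.+1) M (inord j).
Proof.
elim: k => [|k IH] k_le; first by rewrite subn0 big_geq.
rewrite /= IH ?(ltnW k_le) // (big_ltn (m := (n.+1 - k.+1)%N)); last by lia.
rewrite subnSK //; congr (M _ * _); apply: ord_inj.
by rewrite /= inordK ?(val_iter_ordS (ord0 : 'I_n.+1)) /= ?add0n ?modn_small //; lia.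
Qed.

Lemma row_period_rev (gT : finGroupType) n (M : 'I_n.+1 -> gT) :
  row_period (fun r => M (rev_ord r)) = \prod_(j < n.+1) M j.
Proof.
rewrite /row_period walk_prod_rev // subnn big_mkord.
by apply: eq_bigr => j _; rewrite inord_val.
Qed.

Lemma disjoint_fedges_row_step (gT : finGroupType) n (N N' : 'I_n.+1 -> gT) :
  (2 < n.+1)%N -> (forall r, N r != N' r) ->
  [disjoint fedges (row_step N) & fedges (row_step N')].
Proof.
move=> n_gt2 NN'; rewrite -setI_eq0; apply/eqP/setP => e; rewrite !inE.
apply/negP => /andP[/imsetP[v _ ->] /imsetP[u _ e_eq]].
have ordS1 (w : 'I_n.+1) : ordS w != w by apply: (@iter_ordS_neq _ w 1); lia.
have ordS2 (w : 'I_n.+1) : ordS (ordS w) != w by apply: (@iter_ordS_neq _ w 2); lia.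
have : v \in [set u; row_step N' u] by rewrite -e_eq set21.
case/set2P => [vu | v_step].
  have : row_step N v \in [set u; row_step N' u] by rewrite -e_eq set22.
  rewrite vu => /set2P[/(congr1 fst) /eqP | /(congr1 snd) /mulIg /eqP].
    by rewrite (negbTE (ordS1 _)).
  by rewrite (negbTE (NN' _)).
have : u \in [set v; row_step N v] by rewrite e_eq set21.
rewrite v_step => /set2P[] /(congr1 fst) /eqP; rewrite eq_sym.
  by rewrite (negbTE (ordS1 _)).
by rewrite (negbTE (ordS2 _)).
Qed.

Lemma Cg_edgesP (gT : finGroupType) g (S : {set gT}) e :
  reflect (exists u : Cg_vertex gT g,
             exists2 d, d \in S & e = [set u; (ordS u.1, d * u.2)])
          (e \in Cg_edges g S).
Proof.
have step_edge (a b : Cg_vertex gT g) : nat_of_ord b.1 = (a.1.+1 %% g)%N ->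
    b.2 * a.2^-1 \in S ->
    exists u : Cg_vertex gT g,
      exists2 d, d \in S & [set a; b] = [set u; (ordS u.1, d * u.2)].
  case: b => b1 b2 /= ab dS; exists a, (b2 * a.2^-1); rewrite // mulgKV.
  by congr [set _; (_, _)]; apply: ord_inj.
rewrite inE; apply: (iffP existsP) => [[u /existsP[v]] | [u [d dS ->]]].
  case/andP=> /orP[] /andP[/eqP ab dS] /eqP ->; first exact: step_edge.
  by rewrite setUC; apply: step_edge.
exists u; apply/existsP; exists (ordS u.1, d * u.2).
by rewrite eqxx andbT /Cg_adj /= eqxx mulgK dS.
Qed.

Lemma GOP_solution_perm (V : finType) (E : {set {set V}}) m (a : 'I_m -> nat)
    (F : 'I_m -> {set {set V}}) (b : seq nat) :
  perm_eq b [seq a i | i <- enum 'I_m] ->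
  (forall i, is_a_factor E (a i) (F i)) ->
  (forall i j, i != j -> [disjoint F i & F j]) ->
  \bigcup_i F i = E ->
  GOP_solution E b.
Proof.
move=> perm_b factorF disjF coverF.
have /tuple_permP[p b_eq] : perm_eq b [tuple a i | i < m] by [].
have size_b : size b = m by rewrite b_eq size_tuple.
pose h k := p (cast_ord size_b k).
have nth_b (k : 'I_(size b)) : nth 0%N b k = a (h k).
  have nth_pb (i : 'I_m) : nth 0%N b i = a (p i) by rewrite b_eq -tnth_nth !tnth_mktuple.
  exact: (nth_pb (cast_ord size_b k)).
exists (fun k => F (h k)); split.
- by move=> k; rewrite nth_b.
- move=> k l kl; apply: disjF; apply: contra kl.
  by move=> /eqP/perm_inj/cast_ord_inj ->.
- rewrite -coverF (reindex h) //.
  exists (fun i => cast_ord (esym size_b) (p^-1 i)) => i _.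
    by rewrite /h permK cast_ordK.
  by rewrite /h cast_ordKV permKV.
Qed.

Section RowSumMatrix.
Variables (gT : finGroupType) (S : {set gT}) (n : nat) (M : 'I_#|S| -> 'I_n.+1 -> gT).
Hypothesis columnsS : forall j, perm_eq [seq M i j | i <- enum 'I_#|S|] (enum S).

(* Row i read right to left, so that walking once around Z_g multiplies by its row sum. *)
Definition row_factor i := fedges (row_step (fun r => M i (rev_ord r))).

Lemma column_mem i j : M i j \in S.
Proof. by rewrite -mem_enum -(perm_mem (columnsS j)); apply: map_f; rewrite mem_enum. Qed.

Lemma column_inj j : injective (M ^~ j).
Proof.
by apply/injectiveP; rewrite /injectiveb /dinjectiveb (perm_uniq (columnsS j)) enum_uniq.
Qed.

Lemma column_onto j d : d \in S -> exists i, M i j = d.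
Proof.
by rewrite -mem_enum -(perm_mem (columnsS j)) => /mapP[i _ ->]; exists i.
Qed.

Lemma row_factor_sub i : row_factor i \subset Cg_edges n.+1 S.
Proof.
apply/subsetP => _ /imsetP[v _ ->]; apply/Cg_edgesP.
by exists v; exists (M i (rev_ord v.1)); first exact: column_mem.
Qed.

Lemma row_factor_is_factor i :
  is_a_factor (Cg_edges n.+1 S) (n.+1 * #[\prod_(j < n.+1) M i j]) (row_factor i).
Proof.
apply: fedges_factor; [exact: row_step_inj | exact: row_factor_sub | move=> v].
by rewrite order_row_step row_period_rev.
Qed.

Lemma disjoint_row_factors i i' : (2 < n.+1)%N -> i != i' ->
  [disjoint row_factor i & row_factor i'].
Proof.
move=> n_gt2 ii'; apply: disjoint_fedges_row_step => // r.
by apply: contra ii' => /eqP/column_inj ->.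
Qed.

Lemma bigcup_row_factors : \bigcup_i row_factor i = Cg_edges n.+1 S.
Proof.
apply/eqP; rewrite eqEsubset; apply/andP; split.
  by apply/bigcupsP => i _; apply: row_factor_sub.
apply/subsetP => _ /Cg_edgesP[u [d dS ->]].
have [i <-] := column_onto (rev_ord u.1) dS.
by apply/bigcupP; exists i => //; apply/imsetP; exists u.
Qed.

End RowSumMatrix.

Theorem mainTheorem4 (gT : finGroupType) (S : {set gT}) (g : nat) (Sigma : seq gT) :
  (3 <= g)%N ->
  size Sigma = #|S| ->
  has_RSM S g Sigma ->
  GOP_solution (Cg_edges g S) [seq (g * #[sigma]%g)%N | sigma <- Sigma].
Proof.
case: g => [|n] // n_gt2 _ [M [columnsS rowsSigma]].
apply: (GOP_solution_perm (F := row_factor M)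
          (a := fun i => (n.+1 * #[\prod_(j < n.+1) M i j])%N)).
- by rewrite perm_sym (map_comp (fun s => n.+1 * #[s])%N) perm_map.
- exact: row_factor_is_factor.
- by move=> i i'; apply: disjoint_row_factors.
- exact: bigcup_row_factors.
Qed.
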